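(* Let $S_i, S_p, S_b$ be blocks and $M$ an expression such that the statement $W = \mathsf{for}\ S_i\ M\ S_p\ S_b$ satisfies the loop-halting restriction, and let $G, L, \mathcal{N}$ be a global environment, local state and namespace. Then for $\mathbb{M} \in \{\mathsf{break}, \mathsf{continue}\}$ there are no $G', L'$ with $\langle W \mid G; L; \mathcal{N}\rangle \Downarrow \langle \mathbb{M} \mid G'; L'; \mathcal{N}\rangle$.
   Context: Yul syntax. Fix values $v,c$, variables $x,y,z,f$, opcodes $op$. Expressions: $M ::= f(M_1,\dots,M_n) \mid op(M_1,\dots,M_n) \mid x \mid v$. Statements: $S ::= \{S^*\} \mid \mathsf{function}\ f(\vec y) \to \vec z\ \{S^*\} \mid \mathsf{let}\ \vec x := M \mid \vec x := M \mid M \mid \mathsf{if}\ M\ \{S^*\} \mid \mathsf{switch}\ M\ (\mathsf{case}\ c_i\ \{S^*\})^*\ \mathsf{default}\ \{S^*\} \mid \mathsf{for}\ \{S^*\}\ M\ \{S^*\}\ \{S^*\} \mid \mathsf{break} \mid \mathsf{continue} \mid \mathsf{leave}$ (for-loop parts: init block, condition, post-iteration block $S_p$, body $S_b$). Sub-statements: $S\preceq S'$ if $S=S'$ or $S$ is (transitively) a component statement of $S'$ (an element of a block, the body of an if, a case/default block of a switch, the init/post/body block of a for, or the body of a function definition). Loop-halting restriction on a statement $S'$: for every occurrence of $\mathsf{break}$ or $\mathsf{continue}$ at $S\preceq S'$, there is a for-loop $S_f=\mathsf{for}\ S_i'\ M'\ S_p'\ S_b'$ with $S_f\preceq S'$ and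 $S\preceq S_b'$, and no function definition $\mathsf{function}\ g(\vec y)\to\vec z\ B$ with that definition $\preceq S_f$ and $S\preceq B$. Modes: $\mathbb{M} ::= \mathsf{regular}\mid\mathsf{break}\mid\mathsf{continue}\mid\mathsf{leave}$. Tuples $\langle v_1..v_m\rangle$, $\langle v\rangle=v$, $\langle\rangle=\mathsf{regular}$. The dialect supplies $\mathsf{true}/\mathsf{false}$ predicates and an opcode relation $\langle op(\vec v)\mid G\rangle\Downarrow_{\mathsf{opc}}\langle S'\mid G'\rangle$ ($G,G'$ global environments). Configurations $\langle S\mid G;L;\mathcal{N}\rangle$: $L$ finite map variables to values, $\mathcal{N}$ finite map function names to $(\vec y,\vec z,S_b)$. $L_1\upharpoonright L$: restriction of $L_1$ to $\mathrm{dom}(L)$; $\uplus$ disjoint union; $\mathrm{funs}(\{S_1..S_n\})$ maps each function defined directly among the $S_i$ to (parameters, returns, body); for $\mathcal{N}(f)=((y_1..y_n),(z_1..z_m),S_b)$, $L_f=\{y_i\mapsto v_i\}\uplus\{z_j\mapsto 0\}$. Big-step relations $\Downarrow$ (statements), $\Downarrow_{\mathsf{seq}}$ (sequences), $\Downarrow_{\mathsf{exp}}$ (expressions), inductively defined by: (Block) if $\langle S_1,..,S_n\mid G;L;\mathcal{N}\uplus\mathcal{N}_1\rangle\Downarrow_{\mathsf{seq}}\langle\mathbb{M}\mid G_1;L_1;\mathcal{N}\uplus\mathcal{N}_1\rangle$ with $\mathcal{N}_1=\mathrm{funs}(\{S_1..S_n\})$ then $\langle\{S_1..S_n\}\mid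 G;L;\mathcal{N}\rangle\Downarrow\langle\mathbb{M}\mid G_1;L_1\upharpoonright L;\mathcal{N}\rangle$. (SeqEmpty) empty sequence $\Downarrow_{\mathsf{seq}}\mathsf{regular}$, unchanged. (SeqReg) $S_1\Downarrow\mathsf{regular}$ from $(G,L)$ to $(G_1,L_1)$ and $\vec S\Downarrow_{\mathsf{seq}}\mathbb{M}$ from $(G_1,L_1)$ to $(G_2,L_2)$ give $S_1,\vec S\Downarrow_{\mathsf{seq}}\mathbb{M}$ to $(G_2,L_2)$. (SeqIrreg) $S_1\Downarrow\mathbb{M}\in\{\mathsf{break},\mathsf{continue},\mathsf{leave}\}$ to $(G_1,L_1)$ gives $S_1,\vec S\Downarrow_{\mathsf{seq}}\mathbb{M}$ to $(G_1,L_1)$. (FunDef) function definitions $\Downarrow\mathsf{regular}$, unchanged. (Decl) if $M\Downarrow_{\mathsf{exp}}\langle\vec v\rangle$ from $(G,L)$ to $(G_1,L_1)$ and $\vec x\notin\mathrm{dom}(L)$ then $\mathsf{let}\ \vec x:=M\Downarrow\mathsf{regular}$ to $(G_1,L_1[\vec x\mapsto\vec v])$; assignment same with $\vec x\in\mathrm{dom}(L)$. (If) $M\Downarrow_{\mathsf{exp}}\mathsf{false}$ to $(G_0,L_0)$ gives $\mathsf{if}\ M\ S\Downarrow\mathsf{regular}$ to $(G_0,L_0)$; $M\Downarrow_{\mathsf{exp}}\mathsf{true}$ to $(G_0,L_0)$ and $S\Downarrow\mathbb{M}$ to $(G_1,L_1)$ give $\mathsf{if}\ M\ S\Downarrow\mathbb{M}$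 to $(G_1,L_1)$. (Switch) cases $\mathsf{case}\ c_i\ S_i$: if $M\Downarrow_{\mathsf{exp}}v\notin\{c_1..c_n\}$ evaluate default $S_d$; if $M\Downarrow_{\mathsf{exp}}c_k$ with $c_k\notin\{c_1..c_{k-1}\}$ evaluate $S_k$. (ForInit) if $n>0$ and $\{S_1..S_n\ \mathsf{for}\ \{\}\ M\ S_p\ S_b\}\Downarrow\mathbb{M}$ then $\mathsf{for}\ \{S_1..S_n\}\ M\ S_p\ S_b\Downarrow\mathbb{M}$ (same states). For $W_0=\mathsf{for}\ \{\}\ M\ S_p\ S_b$: (ForFalse) $M\Downarrow_{\mathsf{exp}}\mathsf{false}$ to $(G_1,L_1)$ gives $W_0\Downarrow\mathsf{regular}$ to $(G_1,L_1)$; (ForHalt1) $M$ true to $(G_1,L_1)$, $S_b\Downarrow\mathbb{M}_1$ to $(G_2,L_2)$ with $(\mathbb{M}_1,\mathbb{M}_2)\in\{(\mathsf{leave},\mathsf{leave}),(\mathsf{break},\mathsf{regular})\}$ give $W_0\Downarrow\mathbb{M}_2$ to $(G_2,L_2)$; (ForHalt2) $M$ true, $S_b\Downarrow\mathsf{regular}$ or $\mathsf{continue}$, $S_p\Downarrow\mathsf{leave}$ to $(G_3,L_3)$ give $W_0\Downarrow\mathsf{leave}$ to $(G_3,L_3)$; (ForLoop) $M$ true, $S_b\Downarrow\mathsf{regular}$ or $\mathsf{continue}$, $S_p\Downarrow\mathsf{regular}$ to $(G_3,L_3)$, and $W_0\Downarrow\mathbb{M}$ from $(G_3,L_3)$ to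 $(G_4,L_4)$ give $W_0\Downarrow\mathbb{M}$ to $(G_4,L_4)$. (Ident) $x\Downarrow_{\mathsf{exp}}L(x)$. (FunCall) evaluate arguments right to left, $\langle M_n\mid G;L;\mathcal{N}\rangle\Downarrow_{\mathsf{exp}}\langle v_n\mid G_1;L_1;\mathcal{N}\rangle$, …, $\langle M_1\mid G_{n-1};L_{n-1};\mathcal{N}\rangle\Downarrow_{\mathsf{exp}}\langle v_1\mid G_n;L_n;\mathcal{N}\rangle$; if $\langle S_b\mid G_n;L_f;\mathcal{N}\rangle\Downarrow\langle\mathbb{M}\mid G'';L';\mathcal{N}\rangle$ then $f(M_1..M_n)\Downarrow_{\mathsf{exp}}\langle L'(z_1)..L'(z_m)\rangle$ with state $(G'',L_n)$. (OpcCall) same arguments, then if $\langle op(v_1..v_n)\mid G_n\rangle\Downarrow_{\mathsf{opc}}\langle v'_1..v'_m\mid G''\rangle$ the result is $\langle v'_1..v'_m\rangle$ with state $(G'',L_n)$. *)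

From Stdlib Require Import List Arith.
Import ListNotations.
Set Implicit Arguments.

Definition ident := nat.

Inductive mode := Regular | Brk | Cont | Lve.

Section Syntax.
Variables (V Op : Type).

Inductive expr :=
| ECall (f : ident) (args : list expr)
| EOp (o : Op) (args : list expr)
| EVar (x : ident)
| ELit (v : V).

(* Blocks {S*} appearing as components are stored as lists of statements;
   as statements they are [SBlock ss]. *)
Inductive stmt :=
| SBlock (ss : list stmt)
| SFunDef (f : ident) (ys zs : list ident) (body : list stmt)
| SLet (xs : list ident) (e : expr)
| SAssign (xs : list ident) (e : expr)
| SExpr (e : expr)
| SIf (e : expr) (body : list stmt)
| SSwitch (e : expr) (cases : list (V * list stmt)) (dflt : list stmt)
| SFor (init : list stmt) (cond : expr) (post body : list stmt)
| SBreak | SContinue | SLeave.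

Inductive child : stmt -> nat -> stmt -> Prop :=
| ch_block ss k S : nth_error ss k = Some S -> child (SBlock ss) k S
| ch_if e b : child (SIf e b) 0 (SBlock b)
| ch_case e cs d k c Sk :
    nth_error cs k = Some (c, Sk) -> child (SSwitch e cs d) k (SBlock Sk)
| ch_default e cs d : child (SSwitch e cs d) (length cs) (SBlock d)
| ch_for_init i c p b : child (SFor i c p b) 0 (SBlock i)
| ch_for_post i c p b : child (SFor i c p b) 1 (SBlock p)
| ch_for_body i c p b : child (SFor i c p b) 2 (SBlock b)
| ch_fun f ys zs b : child (SFunDef f ys zs b) 0 (SBlock b).

(* occ S' p S : S occurs in S' at position p  (so S ⪯ S'). *)
Inductive occ : stmt -> list nat -> stmt -> Prop :=
| occ_here S : occ S [] S
| occ_child S' k S1 p S : child S' k S1 -> occ S1 p S -> occ S' (k :: p) S.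

Definition loop_halting (S' : stmt) : Prop :=
  forall p, (occ S' p SBreak \/ occ S' p SContinue) ->
    exists q Si' M' Sp' Sb' r,
      occ S' q (SFor Si' M' Sp' Sb') /\
      p = q ++ 2 :: r /\                         (* S ⪯ S_b' *)
      forall q1 g ys zs B r1,
        occ S' (q ++ q1) (SFunDef g ys zs B) ->  (* definition ⪯ S_f *)
        p <> q ++ q1 ++ 0 :: r1.                 (* not S ⪯ B *)

End Syntax.
Arguments SBreak {V Op}.
Arguments SContinue {V Op}.
Arguments SLeave {V Op}.
Arguments EVar {V Op}.
Arguments ELit {V Op}.

Section Semantics.
Variables (V Op Gl : Type).
Variable zero : V.
Variables (vtrue vfalse : V -> Prop).
Variable opc : Op -> list V -> Gl -> list V -> Gl -> Prop.

Definition locals := ident -> option V.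
Definition namespace := ident -> option (list ident * list ident * list (stmt V Op)).

Definition restrict (L1 L : locals) : locals :=
  fun x => match L x with Some _ => L1 x | None => None end.

Fixpoint upd (L : locals) (xs : list ident) (vs : list V) : locals :=
  match xs, vs with
  | x :: xs', v :: vs' => upd (fun y => if Nat.eqb y x then Some v else L y) xs' vs'
  | _, _ => L
  end.

Definition empty_locals : locals := fun _ => None.

Definition build_Lf (ys : list ident) (vs : list V) (zs : list ident) : locals :=
  upd (upd empty_locals zs (repeat zero (length zs))) ys vs.

Fixpoint fundefs (ss : list (stmt V Op))
  : list (ident * (list ident * list ident * list (stmt V Op))) :=
  match ss with
  | [] => []
  | SFunDef f ys zs b :: r => (f, (ys, zs, b)) :: fundefs r
  | _ :: r => fundefs r
  end.

Definition funs (ss : list (stmt V Op)) : namespace :=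
  fun f => match find (fun p => Nat.eqb (fst p) f) (fundefs ss) with
           | Some p => Some (snd p) | None => None end.

Definition nsunion (N N1 : namespace) : namespace :=
  fun f => match N f with Some d => Some d | None => N1 f end.

Inductive exec : namespace -> stmt V Op -> Gl -> locals -> mode -> Gl -> locals -> Prop :=
| E_Block N ss G L m G1 L1 :
    NoDup (map fst (fundefs ss)) ->
    (forall f, N f <> None -> funs ss f = None) ->
    exec_seq (nsunion N (funs ss)) ss G L m G1 L1 ->
    exec N (SBlock ss) G L m G1 (restrict L1 L)
| E_FunDef N f ys zs b G L : exec N (SFunDef f ys zs b) G L Regular G L
| E_Decl N xs e G L vs G1 L1 :
    eval N e G L vs G1 L1 -> length xs = length vs ->
    (forall x, In x xs -> L x = None) ->
    exec N (SLet xs e) G L Regular G1 (upd L1 xs vs)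
| E_Assign N xs e G L vs G1 L1 :
    eval N e G L vs G1 L1 -> length xs = length vs ->
    (forall x, In x xs -> L x <> None) ->
    exec N (SAssign xs e) G L Regular G1 (upd L1 xs vs)
| E_Expr N e G L G1 L1 :
    eval N e G L [] G1 L1 -> exec N (SExpr e) G L Regular G1 L1
| E_IfFalse N e b G L v G0 L0 :
    eval N e G L [v] G0 L0 -> vfalse v -> exec N (SIf e b) G L Regular G0 L0
| E_IfTrue N e b G L v G0 L0 m G1 L1 :
    eval N e G L [v] G0 L0 -> vtrue v ->
    exec N (SBlock b) G0 L0 m G1 L1 -> exec N (SIf e b) G L m G1 L1
| E_SwitchDefault N e cs d G L v G0 L0 m G1 L1 :
    eval N e G L [v] G0 L0 -> ~ In v (map fst cs) ->
    exec N (SBlock d) G0 L0 m G1 L1 -> exec N (SSwitch e cs d) G L m G1 L1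
| E_SwitchCase N e cs d G L k c Sk G0 L0 m G1 L1 :
    eval N e G L [c] G0 L0 -> nth_error cs k = Some (c, Sk) ->
    ~ In c (map fst (firstn k cs)) ->
    exec N (SBlock Sk) G0 L0 m G1 L1 -> exec N (SSwitch e cs d) G L m G1 L1
| E_ForInit N i e p b G L m G1 L1 :
    i <> [] -> exec N (SBlock (i ++ [SFor [] e p b])) G L m G1 L1 ->
    exec N (SFor i e p b) G L m G1 L1
| E_ForFalse N e p b G L v G1 L1 :
    eval N e G L [v] G1 L1 -> vfalse v ->
    exec N (SFor [] e p b) G L Regular G1 L1
| E_ForHalt1 N e p b G L v G1 L1 m1 m2 G2 L2 :
    eval N e G L [v] G1 L1 -> vtrue v ->
    exec N (SBlock b) G1 L1 m1 G2 L2 ->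
    ((m1 = Lve /\ m2 = Lve) \/ (m1 = Brk /\ m2 = Regular)) ->
    exec N (SFor [] e p b) G L m2 G2 L2
| E_ForHalt2 N e p b G L v G1 L1 m1 G2 L2 G3 L3 :
    eval N e G L [v] G1 L1 -> vtrue v ->
    exec N (SBlock b) G1 L1 m1 G2 L2 -> (m1 = Regular \/ m1 = Cont) ->
    exec N (SBlock p) G2 L2 Lve G3 L3 ->
    exec N (SFor [] e p b) G L Lve G3 L3
| E_ForLoop N e p b G L v G1 L1 m1 G2 L2 G3 L3 m G4 L4 :
    eval N e G L [v] G1 L1 -> vtrue v ->
    exec N (SBlock b) G1 L1 m1 G2 L2 -> (m1 = Regular \/ m1 = Cont) ->
    exec N (SBlock p) G2 L2 Regular G3 L3 ->
    exec N (SFor [] e p b) G3 L3 m G4 L4 ->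
    exec N (SFor [] e p b) G L m G4 L4
| E_Break N G L : exec N SBreak G L Brk G L
| E_Continue N G L : exec N SContinue G L Cont G L
| E_Leave N G L : exec N SLeave G L Lve G L
with exec_seq : namespace -> list (stmt V Op) -> Gl -> locals -> mode -> Gl -> locals -> Prop :=
| ES_Empty N G L : exec_seq N [] G L Regular G L
| ES_Reg N S1 ss G L G1 L1 m G2 L2 :
    exec N S1 G L Regular G1 L1 -> exec_seq N ss G1 L1 m G2 L2 ->
    exec_seq N (S1 :: ss) G L m G2 L2
| ES_Irreg N S1 ss G L m G1 L1 :
    exec N S1 G L m G1 L1 -> m <> Regular ->
    exec_seq N (S1 :: ss) G L m G1 L1
with eval : namespace -> expr V Op -> Gl -> locals -> list V -> Gl -> locals -> Prop :=
| V_Ident N x G L v : L x = Some v -> eval N (EVar x) G L [v] G L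
| V_Lit N v G L : eval N (ELit v) G L [v] G L
| V_FunCall N f args G L vsr Gn Ln ys zs body m G'' L' ws :
    evals N (rev args) G L vsr Gn Ln ->
    N f = Some (ys, zs, body) -> length ys = length args -> NoDup (ys ++ zs) ->
    exec N (SBlock body) Gn (build_Lf ys (rev vsr) zs) m G'' L' ->
    Forall2 (fun z w => L' z = Some w) zs ws ->
    eval N (ECall f args) G L ws G'' Ln
| V_OpcCall N o args G L vsr Gn Ln ws G'' :
    evals N (rev args) G L vsr Gn Ln ->
    opc o (rev vsr) Gn ws G'' ->
    eval N (EOp o args) G L ws G'' Ln
(* evaluates a list of single-valued expressions left to right
   (used on the reversed argument list, i.e. arguments right to left) *)
with evals : namespace -> list (expr V Op) -> Gl -> locals -> list V -> Gl -> locals -> Prop :=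
| VS_Nil N G L : evals N [] G L [] G L
| VS_Cons N e es G L v G1 L1 vs G2 L2 :
    eval N e G L [v] G1 L1 -> evals N es G1 L1 vs G2 L2 ->
    evals N (e :: es) G L (v :: vs) G2 L2.

End Semantics.

(* A for loop ends in mode break or continue only if its init block does: the
   post block must end in regular or leave mode for the loop to go on, and a
   break or continue of the body is absorbed by the loop itself.  By induction
   on the derivation, a statement whose break/continue occurrences all lie in
   the body of an inner for loop (which the loop-halting restriction ensures)
   therefore never ends in mode break or continue. *)

From Stdlib Require Import List.
Import ListNotations.
Set Implicit Arguments.

Section Occurrences.
Variables (V Op : Type).
Implicit Types (S x : stmt V Op) (ss : list (stmt V Op)).

Definition is_for S : Prop :=
  match S with SFor _ _ _ _ => True | _ => False end.

Definition loop_exits_bound S : Prop :=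
  forall p, occ S p SBreak \/ occ S p SContinue ->
    exists q i c ps b r, occ S q (SFor i c ps b) /\ p = q ++ 2 :: r.

Lemma occ_nil_inv S x : occ S [] x -> x = S.
Proof. intros H; inversion H; reflexivity. Qed.

Lemma occ_cons_inv S x k p :
  occ S (k :: p) x -> exists S1, child S k S1 /\ occ S1 p x.
Proof. intros H; inversion H; subst; eauto. Qed.

Lemma child_functional S k S1 S2 : child S k S1 -> child S k S2 -> S1 = S2.
Proof.
  intros H1 H2; inversion H1; subst; inversion H2; subst; try congruence;
    match goal with
    | H : nth_error ?cs (length ?cs) = Some _ |- _ =>
        rewrite (proj2 (nth_error_None cs (length cs)) (le_n _)) in H; discriminate
    end.
Qed.

Lemma loop_halting_exits_bound S : loop_halting S -> loop_exits_bound S.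
Proof.
  intros LH p Hp.
  destruct (LH p Hp) as (q & i & c & ps & b & r & Hq & Ep & _).
  exists q, i, c, ps, b, r; auto.
Qed.

Lemma exits_bound_break : ~ loop_exits_bound (@SBreak V Op).
Proof.
  intros Hb; destruct (Hb [] (or_introl (occ_here _))) as (q & _ & _ & _ & _ & r & _ & E).
  destruct q; discriminate.
Qed.

Lemma exits_bound_continue : ~ loop_exits_bound (@SContinue V Op).
Proof.
  intros Hb; destruct (Hb [] (or_intror (occ_here _))) as (q & _ & _ & _ & _ & r & _ & E).
  destruct q; discriminate.
Qed.

Lemma exits_bound_child S k S1 :
  loop_exits_bound S -> child S k S1 -> ~ (is_for S /\ k = 2) ->
  loop_exits_bound S1.
Proof.
  intros Hb Hc Hk p Hp.
  assert (HpS : occ S (k :: p) SBreak \/ occ S (k :: p) SContinue)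
    by (destruct Hp; [left | right]; econstructor; eauto).
  destruct (Hb _ HpS) as ([|a q] & i & c & ps & b & r & Hq & Ep);
    simpl in Ep; injection Ep as -> ->.
  - apply occ_nil_inv in Hq; subst S.
    exfalso; apply Hk; split; [exact I | reflexivity].
  - destruct (occ_cons_inv Hq) as (S2 & Hc2 & Hq2).
    rewrite (child_functional Hc2 Hc) in Hq2.
    exists q, i, c, ps, b, r; auto.
Qed.

Lemma exits_bound_intro S :
  S <> SBreak -> S <> SContinue ->
  (forall k S1, child S k S1 -> (is_for S /\ k = 2) \/ loop_exits_bound S1) ->
  loop_exits_bound S.
Proof.
  intros Hnb Hnc Hch [|k p] Hp.
  - destruct Hp as [Hp | Hp]; apply occ_nil_inv in Hp; subst; contradiction.
  - assert (Hk : exists S1, child S k S1 /\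
                   (occ S1 p SBreak \/ occ S1 p SContinue)).
    { destruct Hp as [Hp | Hp]; destruct (occ_cons_inv Hp) as (S1 & ? & ?); eauto. }
    destruct Hk as (S1 & Hc & Hp1).
    destruct (Hch k S1 Hc) as [[Hfor ->] | Hb1].
    + destruct S; try contradiction.
      exists [], init, cond, post, body, p; split; [constructor | reflexivity].
    + destruct (Hb1 p Hp1) as (q & i & c & ps & b & r & Hq & ->).
      exists (k :: q), i, c, ps, b, r; split; [econstructor; eauto | reflexivity].
Qed.

Lemma exits_bound_block ss :
  loop_exits_bound (SBlock ss) <-> forall x, In x ss -> loop_exits_bound x.
Proof.
  split.
  - intros Hb x Hx; apply In_nth_error in Hx as [k Hk].
    eapply exits_bound_child; [exact Hb | constructor; exact Hk | intros [[] _]].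
  - intros Hss; apply exits_bound_intro; try discriminate.
    intros k S1 Hc; inversion Hc; subst; right.
    eapply Hss, nth_error_In; eassumption.
Qed.

Lemma exits_bound_for_drop_init i c ps b :
  loop_exits_bound (SFor i c ps b) -> loop_exits_bound (SFor [] c ps b).
Proof.
  intros Hb; apply exits_bound_intro; try discriminate.
  intros k S1 Hc; inversion Hc; subst.
  - right; apply exits_bound_block; intros _ [].
  - right; eapply exits_bound_child; [exact Hb | apply ch_for_post | intros [_ ?]; discriminate].
  - left; split; [exact I | reflexivity].
Qed.

End Occurrences.

Scheme exec_mut := Induction for exec Sort Prop
with exec_seq_mut := Induction for exec_seq Sort Prop
with eval_mut := Induction for eval Sort Prop
with evals_mut := Induction for evals Sort Prop.

Lemma exec_exits_bound (V Op Gl : Type) (zero : V) (vtrue vfalse : V -> Prop)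
  (opc : Op -> list V -> Gl -> list V -> Gl -> Prop) N S G L m G1 L1 :
  exec zero vtrue vfalse opc N S G L m G1 L1 ->
  loop_exits_bound S -> ~ (m = Brk \/ m = Cont).
Proof.
  revert N S G L m G1 L1.
  apply (@exec_mut _ _ _ zero vtrue vfalse opc
    (fun _ S _ _ m _ _ _ => loop_exits_bound S -> ~ (m = Brk \/ m = Cont))
    (fun _ ss _ _ m _ _ _ =>
       (forall x, In x ss -> loop_exits_bound x) -> ~ (m = Brk \/ m = Cont))
    (fun _ _ _ _ _ _ _ _ => True) (fun _ _ _ _ _ _ _ _ => True));
  intros; try exact I; try (intros [? | ?]; discriminate).
  - apply H, exits_bound_block; assumption.
  - apply H0; eapply exits_bound_child; [eassumption | apply ch_if | intros [[] _]].
  - apply H0; eapply exits_bound_child; [eassumption | apply ch_default | intros [[] _]].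
  - apply H0; eapply exits_bound_child; [eassumption | eapply ch_case; eassumption | intros [[] _]].
  - apply H, exits_bound_block; intros x Hx.
    apply in_app_or in Hx as [Hx | [<- | []]].
    + apply exits_bound_block with (ss := i); [|exact Hx].
      eapply exits_bound_child; [eassumption | apply ch_for_init | intros [_ ?]; discriminate].
    + eapply exits_bound_for_drop_init; eassumption.
  - destruct o as [[-> ->] | [-> ->]]; intros [? | ?]; discriminate.
  - apply H2; assumption.
  - exfalso; exact (exits_bound_break H).
  - exfalso; exact (exits_bound_continue H).
  - apply H0; intros x Hx; apply H1; right; exact Hx.
  - apply H, H0; left; reflexivity.
Qed.

Theorem lemma3 (V Op Gl : Type) (zero : V) (vtrue vfalse : V -> Prop)
  (opc : Op -> list V -> Gl -> list V -> Gl -> Prop)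
  (Si Sp Sb : list (stmt V Op)) (M : expr V Op)
  (G : Gl) (L : locals V) (N : namespace V Op) (m : mode) :
  loop_halting (SFor Si M Sp Sb) ->
  (m = Brk \/ m = Cont) ->
  ~ (exists (G' : Gl) (L' : locals V),
       exec zero vtrue vfalse opc N (SFor Si M Sp Sb) G L m G' L').
Proof.
  intros LH Hm (G' & L' & Hexec).
  exact (exec_exits_bound Hexec (loop_halting_exits_bound LH) Hm).
Qed.
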